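(* Let $a\ge1$ and $n\ge 2a+1$, and let $\sigma\in S(n;a)$. Then $T_i(\sigma)\in S(n+1;a+1)$ for all $i$.
   Context: For $m\ge a$, $S(m;a)$ denotes the subgroup of $S_m$ generated by all permutations of $\{1,\dots,a\}$ and all permutations of $\{m-a+1,\dots,m\}$. For $\sigma\in S_n$ let $f_\sigma=x_1\cdots x_n-x_{\sigma(1)}\cdots x_{\sigma(n)}$ in the free associative algebra. For $1\le i\le n$ put $T_i(f_\sigma)=f_\sigma(x_1,\dots,x_{i-1},x_ix_{i+1},x_{i+2},\dots,x_{n+1})$; also $T_0(f_\sigma)=x_1f_\sigma(x_2,\dots,x_{n+1})$ and $T_{n+1}(f_\sigma)=f_\sigma(x_1,\dots,x_n)x_{n+1}$. Each $T_i(f_\sigma)$ equals $x_1\cdots x_{n+1}-x_{\tau(1)}\cdots x_{\tau(n+1)}$ for a unique $\tau\in S_{n+1}$, and $T_i(\sigma)$ denotes this $\tau$. *)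

From mathcomp Require Import all_boot all_order all_fingroup.
Set Implicit Arguments. Unset Strict Implicit. Unset Printing Implicit Defensive.

(* Permutations of {1,...,m} are represented by 'S_m acting on 'I_m = {0,...,m-1};
   the point j : 'I_m stands for the number j+1. *)

Definition Sgen (m a : nat) : {set 'S_m} :=
  [set s : 'S_m | perm_on [set j : 'I_m | j < a] s]
  :|: [set s : 'S_m | perm_on [set j : 'I_m | m - a <= j] s].

Definition Sgrp (m a : nat) : {set 'S_m} := <<Sgen m a>>%g.

(* A monomial of the free associative algebra in the letters x_1, x_2, ...
   is a word, i.e. a sequence of (1-based) variable indices. *)
Definition pword (m : nat) (s : 'S_m) : seq nat :=
  [seq (s j).+1 | j <- enum 'I_m].

(* f_sigma = x_1...x_n - x_{sigma(1)}...x_{sigma(n)}, encoded by the pair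
   (first monomial, subtracted monomial). *)
Definition fpoly (m : nat) (s : 'S_m) : seq nat * seq nat := (pword (1%g : 'S_m), pword s).

(* The operation T_i on monomials (it is an algebra map / multiplication,
   so it acts monomial by monomial):
   - i = 0 :      x_j |-> x_{j+1}, then multiply by x_1 on the left;
   - 1<=i<=n :    x_j |-> x_j (j<i), x_i |-> x_i x_{i+1}, x_j |-> x_{j+1} (j>i);
   - i = n+1 :    multiply by x_{n+1} on the right. *)
Definition Tword (n i : nat) (w : seq nat) : seq nat :=
  if i == 0 then 1 :: map S w
  else if i <= n then
    flatten [seq (if j < i then [:: j] else if j == i then [:: i; i.+1]
                  else [:: j.+1]) | j <- w]
  else w ++ [:: n.+1].

Definition Tpoly (n i : nat) (f : seq nat * seq nat) : seq nat * seq nat :=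
  (Tword n i f.1, Tword n i f.2).

(* When 2b <= m, the two symmetric groups generating S(m;b) act on disjoint
   blocks, so S(m;b) consists exactly of the permutations that stabilise the
   head {1..b} and the tail {m-b+1..m} and fix every point in between: such a
   permutation is the product of its restrictions to the two blocks.
   Each T_i(sigma) is sigma with one point inserted, i.e. lift_perm p q sigma:
   for i = 0 and i = n+1 the new point is fixed at either end, and for
   1 <= i <= n, if sigma(k) = i, the letter x_i at position k of the word is
   doubled, so position k+1 is sent to i+1.  Since k and i = sigma(k) lie in
   the same block for (n, a), the points k+1 and i+1 lie in the same block
   for (n+1, a+1) (or coincide), and lift_perm then respects the blocks. *)

From mathcomp Require Import all_boot all_order all_fingroup.
From mathcomp Require Import zify.

Set Implicit Arguments. Unset Strict Implicit. Unset Printing Implicit Defensive.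

Section TwoBlocks.

Variable T : finType.
Implicit Types A B : {set T}.

Lemma Sym_sub_astabs_disjoint A B : [disjoint A & B] ->
  (Sym A \subset 'N(A | 'P) :&: 'N(B | 'P) :&: Sym (A :|: B))%g.
Proof.
move=> disjAB; apply/subsetP => s; rewrite inE => sA.
have nAs x : (s x \in A) = (x \in A) by rewrite perm_closed.
apply/setIP; split; last by rewrite inE; apply: subset_trans sA (subsetUl _ _).
apply/setIP; split; apply/astabsP => x /=; rewrite apermE; first exact: nAs.
have [xA|xNA] := boolP (x \in A); last by rewrite (out_perm sA).
by rewrite !(disjointFr disjAB) ?nAs.
Qed.

Lemma gen_Sym_disjoint A B : [disjoint A & B] ->
  (<<Sym A :|: Sym B>> = 'N(A | 'P) :&: 'N(B | 'P) :&: Sym (A :|: B))%g.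
Proof.
move=> disjAB; apply/eqP.
rewrite eqEsubset gen_subG subUset Sym_sub_astabs_disjoint //=.
apply/andP; split.
  by rewrite (setIC 'N(A | 'P)%g) setUC Sym_sub_astabs_disjoint // disjoint_sym.
apply/subsetP => s /setIP[/setIP[nAs nBs]]; rewrite inE => sAB.
have -> : s = (restr_perm A s * restr_perm B s)%g.
  apply/permP => x; rewrite permM.
  have [xA|xNA] := boolP (x \in A).
    have sxA : s x \in A by move/astabsP: nAs => /(_ x); rewrite /= apermE => ->.
    rewrite (restr_permE nAs xA) (out_perm (restr_perm_on B s)) //.
    by rewrite (disjointFr disjAB sxA).
  rewrite (out_perm (restr_perm_on A s) xNA).
  have [xB|xNB] := boolP (x \in B); first by rewrite (restr_permE nBs xB).
  by rewrite (out_perm (restr_perm_on B s) xNB) (out_perm sAB) // inE negb_or xNA.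
by rewrite groupM // mem_gen // !inE restr_perm_on ?orbT.
Qed.

End TwoBlocks.

Lemma SgrpP m b (s : 'S_m) : b + b <= m ->
  reflect (forall x : 'I_m, [/\ (s x < b) = (x < b), (m - b <= s x) = (m - b <= x)
                               & b <= x < m - b -> s x = x :> nat])
          (s \in Sgrp m b).
Proof.
move=> hbm; rewrite /Sgrp /Sgen gen_Sym_disjoint; last first.
  by rewrite disjoints_subset; apply/subsetP => x; rewrite !inE; lia.
apply: (iffP idP) => [|hs].
  move=> /setIP[/setIP[/astabsP nHs /astabsP nTs]]; rewrite inE => sHT x.
  split; [move: (nHs x) | move: (nTs x) | move=> hx]; rewrite /= ?apermE ?inE //.
  by rewrite (out_perm sHT) // !inE; lia.
apply/setIP; split.
  by apply/setIP; split; apply/astabsP => x; rewrite /= apermE !inE; case: (hs x).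
rewrite inE; apply/subsetP => x; rewrite !inE; apply: contraR => hx.
by case: (hs x) => _ _ sx; apply/eqP/val_inj/sx; lia.
Qed.

Lemma lift_perm_Sgrp n a (s : 'S_n) (p q : 'I_n.+1) : a + a < n -> s \in Sgrp n a ->
  (p <= a /\ q <= a) \/ (n - a <= p /\ n - a <= q) \/ p = q :> nat ->
  lift_perm p q s \in Sgrp n.+1 a.+1.
Proof.
move=> ha /(SgrpP _ (ltnW ha)) hs pq; apply/SgrpP => [|y]; first lia.
have := ltn_ord p; have := ltn_ord q.
case: (unliftP p y) => [x ->|->]; last by rewrite lift_perm_id; split; lia.
have [] := hs x; rewrite lift_perm_lift /= /bump.
move: (ltn_ord x) (ltn_ord (s x)).
by case: leqP; case: leqP => /= *; split; lia.
Qed.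

Lemma enum_ord_lift n (p : 'I_n.+1) :
  enum 'I_n.+1 =
  map (lift p) (take p (enum 'I_n)) ++ p :: map (lift p) (drop p (enum 'I_n)).
Proof.
have hp : p <= n by rewrite -ltnS.
have val_lift s : map val (map (lift p) s) = map (bump p) (map val s).
  by rewrite -!map_comp.
apply: (inj_map val_inj); rewrite map_cat /= !val_lift.
rewrite [map val (take _ _)]map_take [map val (drop _ _)]map_drop !val_enum_ord.
rewrite take_iota drop_iota add0n (minn_idPl hp).
have -> : map (bump p) (iota 0 p) = iota 0 p.
  by apply: map_id_in => x; rewrite mem_iota /bump; case: leqP => /=; lia.
have -> : map (bump p) (iota p (n - p)) = iota p.+1 (n - p).
  by rewrite (iotaDl 1 p); apply/eq_in_map => x; rewrite mem_iota /bump; case: leqP => /=; lia.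
by rewrite [in LHS](_ : n.+1 = p + (n - p).+1) ?iotaD //; lia.
Qed.

Lemma pword_lift_perm n (s : 'S_n) (p q : 'I_n.+1) :
  pword (lift_perm p q s) =
  [seq (bump q (s x)).+1 | x <- take p (enum 'I_n)] ++
  q.+1 :: [seq (bump q (s x)).+1 | x <- drop p (enum 'I_n)].
Proof.
rewrite /pword (enum_ord_lift p) map_cat /= -!map_comp lift_perm_id.
by congr (_ ++ _ :: _); apply: eq_map => x /=; rewrite lift_perm_lift.
Qed.

Lemma Tword_cat n i w1 w2 : 0 < i <= n ->
  Tword n i (w1 ++ w2) = Tword n i w1 ++ Tword n i w2.
Proof.
by case/andP => /lt0n_neq0/negbTE i0 iN; rewrite /Tword i0 iN map_cat flatten_cat.
Qed.

Lemma Tword_shift n v w : v < n -> v \notin w ->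
  Tword n v.+1 (map S w) = [seq (bump v.+1 j).+1 | j <- w].
Proof.
move=> vn vNw; rewrite /Tword /= vn -map_comp -[RHS]flatten_map1.
congr flatten; apply/eq_in_map => j jw /=; rewrite ltnS eqSS /bump.
have jv : j != v by apply: contraNneq vNw => <-.
by rewrite (negbTE jv); case: ltngtP jv => //= _ _; rewrite add1n.
Qed.

Lemma Tword_first n (s : 'S_n) :
  Tword n 0 (pword s) = pword (lift_perm ord0 ord0 s).
Proof. by rewrite pword_lift_perm take0 drop0 /Tword /pword -map_comp. Qed.

Lemma Tword_last n (s : 'S_n) :
  Tword n n.+1 (pword s) = pword (lift_perm ord_max ord_max s).
Proof.
rewrite pword_lift_perm /= take_oversize ?drop_oversize ?size_enum_ord //.
rewrite /Tword /= ltnn; congr (_ ++ _); apply: eq_map => x.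
by rewrite /bump leqNgt ltn_ord.
Qed.

Lemma Tword_mid n (s : 'S_n) (k v : 'I_n) : s k = v ->
  Tword n v.+1 (pword s) = pword (lift_perm (lift ord0 k) (lift ord0 v) s).
Proof.
move=> skv; set e := enum 'I_n.
have ke : k < size e by rewrite size_enum_ord.
have e_split : e = take k e ++ k :: drop k.+1 e.
  by rewrite -{2}(nth_ord_enum k k) -drop_nth // cat_take_drop.
have := enum_uniq 'I_n; rewrite -/e {1}e_split cat_uniq /= negb_or.
case/and4P=> _ /andP[kNl _] kNr _.
have vN l : k \notin l -> (v : nat) \notin [seq val (s x) | x <- l].
  by rewrite -skv (mem_map (inj_comp val_inj (@perm_inj _ s))).
have pword_split : pword s = map S [seq val (s x) | x <- take k e] ++
                             v.+1 :: map S [seq val (s x) | x <- drop k.+1 e].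
  by rewrite /pword -/e {1}e_split map_cat /= skv -!map_comp.
have vn : 0 < v.+1 <= n by rewrite ltn_ord.
have Tv : Tword n v.+1 [:: v.+1] = [:: v.+1; v.+2].
  by rewrite /Tword /= (ltn_ord v) ltnn eqxx.
rewrite pword_split -cat1s !(Tword_cat _ _ vn) Tv !Tword_shift ?vN //.
rewrite pword_lift_perm lift0 (take_nth k) // nth_ord_enum map_rcons -cats1 -catA.
by rewrite skv /= /bump ltnn -!map_comp.
Qed.

Theorem lemma2p16 (a n : nat) (ha : 1 <= a) (hn : 2 * a + 1 <= n)
  (s : 'S_n) (hs : s \in Sgrp n a) (i : nat) (hi : i <= n.+1) :
  exists2 t : 'S_n.+1, t \in Sgrp n.+1 a.+1 & Tpoly n i (fpoly s) = fpoly t.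
Proof.
have ha2 : a + a < n by lia.
rewrite /Tpoly /fpoly /=.
case: i hi => [|v] hi.
  exists (lift_perm ord0 ord0 s); last by rewrite !Tword_first lift_perm1.
  by apply: lift_perm_Sgrp => //; right; right.
have [vn|nv] := ltnP v n; last first.
  have -> : v = n by lia.
  exists (lift_perm ord_max ord_max s); last by rewrite !Tword_last lift_perm1.
  by apply: lift_perm_Sgrp => //; right; right.
pose w := Ordinal vn; pose k := (s^-1 w)%g.
have skw : s k = w by rewrite permKV.
exists (lift_perm (lift ord0 k) (lift ord0 w) s).
  apply: lift_perm_Sgrp => //; rewrite !lift0.
  by move/(SgrpP _ (ltnW ha2))/(_ k): hs; rewrite skw => -[]; lia.
rewrite -[v]/(val w).
by rewrite (Tword_mid (perm1 w)) (Tword_mid skw) lift_perm1.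
Qed.
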